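(* Let $\mathfrak{H}$ be a complete Heyting algebra and $\mathsf{i}\in\mathfrak{H}$. Then $$\bigwedge_{\mathsf{j}\in\mathfrak{H}}(\mathsf{j}\vee(\mathsf{j}\to\mathsf{i})) = \bigwedge\{\mathsf{h}\in\mathfrak{H}\mid \mathsf{h}\ge\mathsf{i}\text{ and }\mathsf{h}\text{ is }\mathsf{i}\text{-dense}\}.$$
   Context: For elements $\mathsf{h}\ge\mathsf{i}$ of a Heyting algebra, $\mathsf{h}$ is called $\mathsf{i}$-dense if for every $\mathsf{j}$ in the algebra, $\mathsf{h}\wedge\mathsf{j}=\mathsf{i}$ implies $\mathsf{j}=\mathsf{i}$. *)

From HB Require Import structures.
From mathcomp Require Import all_boot all_order.
Set Implicit Arguments. Unset Strict Implicit. Unset Printing Implicit Defensive.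
Import Order.Theory.
Local Open Scope order_scope.

(* A complete Heyting algebra: a lattice T (MathComp order.v) together with
   arbitrary meets (infima of arbitrary subsets, given as predicates T -> Prop),
   which makes it a complete lattice, and a Heyting implication right adjoint
   to binary meet. *)
Record completeHeyting (d : Order.disp_t) (T : latticeType d) := CompleteHeyting {
  chInf : (T -> Prop) -> T;
  chInf_lb : forall (S : T -> Prop) x, S x -> chInf S <= x;
  chInf_glb : forall (S : T -> Prop) y, (forall x, S x -> y <= x) -> y <= chInf S;
  chImpl : T -> T -> T;
  chImplP : forall x y z, (x `&` y <= z) = (x <= chImpl y z)
}.

Definition idense d (T : latticeType d) (i h : T) : Prop :=
  forall j : T, h `&` j = i -> j = i.

From HB Require Import structures.
From mathcomp Require Import all_boot all_order.
Import Order.Theory.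
Local Open Scope order_scope.

(* The two families have the same members. An i-dense h >= i satisfies
   h /\ (h -> i) = i, hence h -> i = i and h = h \/ (h -> i). Conversely, if
   (j \/ (j -> i)) /\ k = i then j /\ k <= i, so k <= j -> i <= j \/ (j -> i)
   and therefore k = (j \/ (j -> i)) /\ k = i. *)

Section HeytingImplication.

Context {d : Order.disp_t} {T : latticeType d} {impl : T -> T -> T}.
Hypothesis implP : forall x y z, (x `&` y <= z) = (x <= impl y z).

Lemma le_impl y z : z <= impl y z.
Proof. by rewrite -implP leIl. Qed.

Lemma idense_implE i h : i <= h -> idense i h -> impl h i = i.
Proof.
move=> ih dense_h; apply: dense_h; apply/le_anti/andP; split.
  by rewrite meetC implP.
by rewrite lexI ih le_impl.
Qed.

Lemma le_join_impl i j : i <= j `|` impl j i.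
Proof. exact: le_trans (le_impl j i) (leUr _ _). Qed.

Lemma idense_join_impl i j : idense i (j `|` impl j i).
Proof.
move=> k meet_eq_i; rewrite -meet_eq_i; apply/esym/meet_r.
have k_le_impl : k <= impl j i.
  by rewrite -implP -meet_eq_i lexI leIl andbT (le_trans (leIr j k)) ?leUl.
exact: le_trans k_le_impl (leUr _ _).
Qed.

End HeytingImplication.

Lemma chInf_le_sub d (T : latticeType d) (H : completeHeyting T)
    (S S' : T -> Prop) :
  (forall x, S x -> S' x) -> chInf H S' <= chInf H S.
Proof. by move=> sub_SS'; apply: chInf_glb => x /sub_SS'; apply: chInf_lb. Qed.

Theorem corollary4p5 (d : Order.disp_t) (T : latticeType d)
    (H : completeHeyting T) (i : T) :
  chInf H (fun x => exists j : T, x = j `|` chImpl H j i)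
  = chInf H (fun h => i <= h /\ idense i h).
Proof.
apply/le_anti/andP; split; apply: chInf_le_sub.
- move=> h [ih dense_h]; exists h.
  by rewrite (idense_implE (chImplP H)) // join_l.
- move=> _ [j ->]; split.
    exact: le_join_impl (chImplP H) _ _.
  exact: idense_join_impl (chImplP H) _ _.
Qed.
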